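(* For all positive integers $m$ and $n$ and every sequence $(a_i\colon i\in\mathbb{N})$ of positive integers, there is a bound $N$ (depending only on $m$, $n$ and the sequence) such that every strictly increasing chain $S_0\subsetneq S_1\subsetneq S_2\subsetneq\cdots$ of antichains $S_k$ of $(\mathbb{N}^m\times n,\le)$ satisfying $S_k\subseteq\{(\xi,h)\colon|\xi|\le a_k\}$ for each $k$ has length at most $N$.
   Context: $n$ denotes $\{0,\dots,n-1\}$; $\le$ is the product (componentwise) order on $\mathbb{N}^m\times n$; for $\xi\in\mathbb{N}^m$, $|\xi|=\sum_{i<m}\xi(i)$. An antichain is a set of pairwise $\le$-incomparable elements. *)

From mathcomp Require Import all_boot.
Set Implicit Arguments. Unset Strict Implicit. Unset Printing Implicit Defensive.

Definition elem (m n : nat) : Type := ({ffun 'I_m -> nat} * 'I_n)%type.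

Definition ple (m n : nat) (x y : elem m n) : Prop :=
  (forall i : 'I_m, x.1 i <= y.1 i) /\ (nat_of_ord x.2 <= nat_of_ord y.2).

Definition wt (m : nat) (xi : {ffun 'I_m -> nat}) : nat := \sum_(i < m) xi i.

Definition esubset (m n : nat) := elem m n -> Prop.

Definition antichain (m n : nat) (S : esubset m n) : Prop :=
  forall x y, S x -> S y -> x <> y -> ~ ple x y.

Definition strict_subset (m n : nat) (A B : esubset m n) : Prop :=
  (forall x, A x -> B x) /\ (exists x, B x /\ ~ A x).

(* Choose x_k in S_(k+1) but not in S_k.  Being distinct elements of the antichain S_L,
   the x_k form a bad sequence (no i < j with x_i <= x_j), and |x_k| <= a_(k+1).  Since
   each weight bound admits only finitely many elements, arbitrarily long such sequences
   would yield, by Konig's lemma, an infinite bad sequence, contradicting Dickson's lemma. *)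

From Stdlib Require Import Classical IndefiniteDescription.
From mathcomp Require Import all_boot.
Set Implicit Arguments. Unset Strict Implicit.

Lemma exists_tail_argmin (f : nat -> nat) i :
  exists j, i <= j /\ forall k, i <= k -> f j <= f k.
Proof.
suff : forall v k, i <= k -> f k <= v ->
    exists j, i <= j /\ forall k, i <= k -> f j <= f k by apply.
elim=> [|v IHv] k ik fkv.
  by exists k; split=> [|l _]; last exact: leq_trans fkv (leq0n _).
have [[l il flk]|no_smaller] := classic (exists2 l, i <= l & f l < f k).
  by apply: (IHv l il); rewrite -ltnS (leq_trans flk).
exists k; split=> // l il; rewrite leqNgt; apply/negP => flk.
by apply: no_smaller; exists l.
Qed.

Lemma nondecreasing_subseq (f : nat -> nat) :
  exists2 p : nat -> nat, {homo p : i j / i < j} & {homo f \o p : i j / i <= j}.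
Proof.
have [g gP] := functional_choice _ (exists_tail_argmin f).
(* [g i] minimises [f] on [[i, oo)]; the next tail starts just after the minimum found. *)
pose q k := iter k (fun j => (g j).+1) 0.
have q_le_gq k : q k <= g (q k) by have [] := gP (q k).
have gq_lt k : g (q k) < g (q k.+1) := leq_trans (leqnn _) (q_le_gq k.+1).
exists (g \o q); first exact: homo_ltn ltn_trans gq_lt.
apply: homo_leq leqnn leq_trans _ => k /=.
by apply: (gP (q k)).2; rewrite (leq_trans (q_le_gq k)) // ltnW.
Qed.

Lemma nondecreasing_subseq_family (I : eqType) (F : I -> nat -> nat) (r : seq I) :
  exists2 p : nat -> nat, {homo p : i j / i < j} &
    forall t, t \in r -> {homo F t \o p : i j / i <= j}.
Proof.
elim: r => [|t r [p p_incr Fp_mono]]; first by exists id.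
have [q q_incr Fq_mono] := nondecreasing_subseq (F t \o p).
exists (p \o q) => [i j lt_ij|t']; first exact/p_incr/q_incr.
rewrite inE => /predU1P [-> //| t'r] i j le_ij.
exact/(Fp_mono t' t'r)/ltnW_homo.
Qed.

Lemma dickson (I : finType) (F : I -> nat -> nat) :
  exists i j, i < j /\ forall t, F t i <= F t j.
Proof.
have [p p_incr Fp_mono] := nondecreasing_subseq_family F (enum I).
by exists (p 0), (p 1); split=> [|t]; [apply: p_incr | apply: Fp_mono; rewrite ?mem_enum].
Qed.

Section ProductOrder.
Variables m n : nat.

Definition pleb (x y : elem m n) := [forall i, x.1 i <= y.1 i] && (x.2 <= y.2).

Lemma pleP (x y : elem m n) : reflect (ple x y) (pleb x y).
Proof. by apply: (iffP andP) => -[/forallP le_xy le_h]. Qed.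

Lemma dickson_elem (X : nat -> elem m n) : exists i j, i < j /\ pleb (X i) (X j).
Proof.
pose F (t : option 'I_m) k := if t is Some i then (X k).1 i else (X k).2.
have [i [j [lt_ij leF]]] := dickson F.
exists i, j; split=> //; apply/andP; split; last exact: (leF None).
by apply/forallP => c; apply: (leF (Some c)).
Qed.

End ProductOrder.

Section Konig.
Variables (T : eqType) (P : seq T -> Prop).
Hypothesis P_prefix : forall s t, P (s ++ t) -> P s.
Hypothesis P_finitely_branching :
  forall s, exists c : seq T, forall z, P (rcons s z) -> z \in c.

Definition extendable s := forall N, exists t, size t = N /\ P (s ++ t).

Lemma not_extendable_bound s :
  ~ extendable s -> exists N, forall t, N <= size t -> ~ P (s ++ t).
Proof.
move=> /not_all_ex_not [N noext]; exists N => t le_Nt Pst.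
apply: noext; exists (take N t); split; first exact: size_takel.
by apply: (P_prefix (t := drop N t)); rewrite -catA cat_take_drop.
Qed.

Lemma extendable_rcons s : extendable s -> exists z, extendable (rcons s z).
Proof.
move=> ext_s; apply: NNPP => no_ext.
have [c cP] := P_finitely_branching s.
have [N NP] : exists N, forall z t, z \in c -> N <= size t -> ~ P (rcons s z ++ t).
  elim: c {cP} => [|z c [N NP]]; first by exists 0.
  have [Nz NzP] := not_extendable_bound (fun ext_z => no_ext (ex_intro _ z ext_z)).
  exists (maxn Nz N) => z' t; rewrite inE geq_max => /predU1P [->|z'c] /andP [le_Nz le_N].
    exact: NzP.
  exact: NP.
have [[|z t] [//= [size_t]]] := ext_s N.+1; rewrite -cat_rcons => Pszt.
apply: (NP z t _ _ Pszt); first exact: cP (P_prefix Pszt).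
by rewrite size_t.
Qed.

Lemma konig :
  (forall N, exists s, size s = N /\ P s) -> exists X : nat -> T, forall L, P (mkseq X L).
Proof.
move=> ext_nil; have [[|x0 _] [//= _ _]] := ext_nil 1.
have [next nextP] : exists next : seq T -> T,
    forall s, extendable s -> extendable (rcons s (next s)).
  apply: (functional_choice (fun s z => extendable s -> extendable (rcons s z))) => s.
  have [/extendable_rcons [z ext_z]|not_ext] := classic (extendable s).
    by exists z.
  by exists x0.
pose X k := next (iter k (fun s => rcons s (next s)) [::]).
have prefixE k : iter k (fun s => rcons s (next s)) [::] = mkseq X k.
  by elim: k => //= k IHk; rewrite mkseqS -IHk.
have ext_X k : extendable (mkseq X k).
  by rewrite -prefixE; elim: k => [|k IHk] //=; apply: nextP.
exists X => L; have [t [/size0nil -> ]] := ext_X L 0.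
by rewrite cats0.
Qed.

End Konig.

Section BadSequences.
Variables (m n : nat) (b : nat -> nat).

Definition bad (s : seq (elem m n)) := pairwise (fun x y => ~~ pleb x y) s.

Definition weight_bounded (s : seq (elem m n)) :=
  forall k, k < size s -> nth 0 [seq wt x.1 | x <- s] k <= b k.

Lemma coord_le_wt (xi : {ffun 'I_m -> nat}) i : xi i <= wt xi.
Proof. by rewrite /wt (bigD1 i) //= leq_addr. Qed.

Lemma finite_weight_ball w : exists c : seq (elem m n), forall x, wt x.1 <= w -> x \in c.
Proof.
pose widen (t : {ffun 'I_m -> 'I_w.+1} * 'I_n) : elem m n :=
  ([ffun i => nat_of_ord (t.1 i)], t.2).
exists (codom widen) => -[xi h] /= wt_xi.
suff -> : (xi, h) = widen ([ffun i => inord (xi i)], h) by apply: codom_f.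
congr pair; apply/ffunP => i; rewrite !ffunE inordK // ltnS.
exact: leq_trans (coord_le_wt xi i) wt_xi.
Qed.

Lemma bad_weight_bounded_size :
  exists N, forall s, bad s -> weight_bounded s -> size s <= N.
Proof.
pose P s := bad s /\ weight_bounded s.
have P_prefix s t : P (s ++ t) -> P s.
  rewrite /P /bad pairwise_cat => -[/and3P [_ bad_s _] wb_st]; split=> // k lt_ks.
  by have := wb_st k; rewrite size_cat map_cat nth_cat size_map lt_ks ltn_addr //; apply.
have P_finitely_branching s :
    exists c : seq (elem m n), forall z, P (rcons s z) -> z \in c.
  have [c cP] := finite_weight_ball (b (size s)); exists c => z [_ wb_sz]; apply: cP.
  by have := wb_sz (size s); rewrite size_rcons map_rcons nth_rcons size_map ltnn eqxx; apply.
apply: NNPP => unbounded.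
have [|X PX] := konig P_prefix P_finitely_branching.
  move=> N; have [s] : exists s, P s /\ N < size s.
    apply: NNPP => no_long; apply: unbounded; exists N => s bad_s wb_s.
    by rewrite leqNgt; apply/negP => lt_Ns; apply: no_long; exists s.
  move=> [Ps lt_Ns]; exists (take N s); split; first by rewrite size_takel // ltnW.
  by apply: (P_prefix _ (drop N s)); rewrite cat_take_drop.
have [i [j [lt_ij le_ij]]] := dickson_elem X.
have [/(pairwiseP (X 0)) bad_X _] := PX j.+1.
have in_prefix k : k <= j -> k \in gtn (size (mkseq X j.+1)) by rewrite inE size_mkseq.
have := bad_X i j (in_prefix i (ltnW lt_ij)) (in_prefix j (leqnn j)) lt_ij.
by rewrite !nth_mkseq ?ltnS ?(ltnW lt_ij) // le_ij.
Qed.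

End BadSequences.

Section StrictChains.
Variables (m n : nat) (S : nat -> esubset m n).

Lemma strict_chain_mono L j k x :
  (forall k, k < L -> strict_subset (S k) (S k.+1)) -> j <= k <= L -> S j x -> S k x.
Proof.
move=> S_strict /andP []; elim: k => [|k IHk]; first by rewrite leqn0 => /eqP ->.
rewrite leq_eqVlt => /predU1P [-> //| lt_jk1] lt_kL Sjx.
by apply: (S_strict k lt_kL).1; apply: IHk; rewrite // ltnW.
Qed.

Lemma strict_chain_witnesses (e0 : elem m n) L :
  (forall k, k < L -> strict_subset (S k) (S k.+1)) ->
  exists s, size s = L /\ forall k, k < L -> S k.+1 (nth e0 s k) /\ ~ S k (nth e0 s k).
Proof.
elim: L => [|l IHl] S_strict; first by exists [::].
have [|s [size_s sP]] := IHl; first by move=> k lt_kl; apply/S_strict/ltnW.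
have [_ [z [Sz nSz]]] := S_strict l (ltnSn l).
exists (rcons s z); split=> [|k]; first by rewrite size_rcons size_s.
rewrite ltnS nth_rcons size_s leq_eqVlt => /predU1P [->|lt_kl]; first by rewrite ltnn eqxx.
by rewrite lt_kl; apply: sP.
Qed.

Lemma strict_chain_witnesses_bad (e0 : elem m n) L s :
  (forall k, k < L -> strict_subset (S k) (S k.+1)) -> antichain (S L) -> size s = L ->
  (forall k, k < L -> S k.+1 (nth e0 s k) /\ ~ S k (nth e0 s k)) -> bad s.
Proof.
move=> S_strict S_anti size_s sP; apply/(pairwiseP e0) => i j.
rewrite !inE size_s => lt_iL lt_jL lt_ij; apply/negP => /pleP.
have S_L k : k < L -> S L (nth e0 s k).
  by move=> lt_kL; apply: (strict_chain_mono S_strict _ (sP k lt_kL).1); rewrite lt_kL leqnn.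
apply: S_anti; [exact: S_L | exact: S_L | move=> eq_ij].
apply: (sP j lt_jL).2; rewrite -eq_ij.
by apply: (strict_chain_mono S_strict _ (sP i lt_iL).1); rewrite lt_ij ltnW.
Qed.

End StrictChains.

Theorem lemma4p9 (m n : nat) (a : nat -> nat) :
  0 < m -> 0 < n -> (forall i, 0 < a i) ->
  exists N : nat,
    forall (S : nat -> esubset m n) (L : nat),
      (forall k, k <= L -> antichain (S k)) ->
      (forall k, k <= L -> forall x, S k x -> wt x.1 <= a k) ->
      (forall k, k < L -> strict_subset (S k) (S k.+1)) ->
      L <= N.
Proof.
move=> _ n_gt0 _.
have [N HN] := bad_weight_bounded_size m n (fun k => a k.+1).
exists N => S L S_anti S_wt S_strict.
pose e0 : elem m n := ([ffun=> 0], Ordinal n_gt0).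
have [s [size_s sP]] := strict_chain_witnesses e0 S_strict.
rewrite -size_s; apply: HN => [|k].
  exact: strict_chain_witnesses_bad S_strict (S_anti L (leqnn L)) size_s sP.
rewrite size_s => lt_kL; rewrite (nth_map e0) ?size_s //.
exact: S_wt (sP k lt_kL).1.
Qed.
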